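(* Let $d\geq 1$ and let $\mathcal{F}$ be a sample of the wired uniform spanning forest of $\mathbb{Z}^d$. Let $H$ be a (possibly infinite) set of edges of $\mathbb{Z}^d$ that does not contain a cycle. Then there is an ordering $\{e_n\}_{n\geq 1}$ of $H$ such that for all $n\geq 1$ and any partition of $\{e_1,\dots,e_{n-1}\}$ into two sets $A$ and $B$ we have $$\mathbb{P}\big(e_n\in\mathcal{F}\ \big|\ A\subseteq\mathcal{F},\ B\cap\mathcal{F}=\emptyset\big)\geq\frac{1}{2d}.$$
   Context: The wired uniform spanning forest (WUSF) of $\mathbb{Z}^d$ is the weak limit of uniform spanning trees on an exhaustion of $\mathbb{Z}^d$ with wired boundary conditions. *)

From HB Require Import structures.
From mathcomp Require Import all_boot all_order all_algebra.
From mathcomp Require Import finmap.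
From mathcomp Require Import all_classical all_reals all_analysis.

Set Implicit Arguments.
Unset Strict Implicit.
Unset Printing Implicit Defensive.

Import Order.TTheory GRing.Theory Num.Theory.
Import numFieldNormedType.Exports.
Local Open Scope fset_scope.
Local Open Scope ring_scope.
Local Open Scope classical_set_scope.

Definition pt (d : nat) := {ffun 'I_d -> int}.

Definition shiftp d (x : pt d) (i : 'I_d) : pt d := [ffun j => x j + (j == i)%:Z].
Definition unshiftp d (x : pt d) (i : 'I_d) : pt d := [ffun j => x j - (j == i)%:Z].

(* Edges of Z^d: the edge (x, i) joins x and x + e_i.  Every nearest-neighbour
   edge of Z^d has exactly one such representation. *)
Definition edge (d : nat) := (pt d * 'I_d)%type.

Definition zends d (e : edge d) : pt d * pt d := (e.1, shiftp e.1 e.2).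

Inductive conn (E V : Type) (ends : E -> V * V) (S : E -> Prop) : V -> V -> Prop :=
| conn_refl v : conn ends S v v
| conn_step u v w e : S e -> (ends e = (u, v) \/ ends e = (v, u)) ->
    conn ends S v w -> conn ends S u w.

Definition acyclic (E V : Type) (ends : E -> V * V) (S : E -> Prop) : Prop :=
  forall e, S e -> ~ conn ends (fun f => S f /\ f <> e) (ends e).1 (ends e).2.

Definition inbox d (n : nat) (x : pt d) : bool := [forall i, `|x i| <= n%:Z].

Definition boxpts d (n : nat) : {fset pt d} :=
  [fset x in [seq [ffun i => (val (f i))%:Z - n%:Z] | f : {ffun 'I_d -> 'I_(n.*2.+1)}]].

Definition boxedges d (n : nat) : {fset edge d} :=
  [fset e in [seq (x, i) | x <- boxpts d n, i <- enum 'I_d]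
          ++ [seq (unshiftp x i, i) | x <- boxpts d n, i <- enum 'I_d]].

(* Wired graph G_n^*: the complement of the box is identified to a single vertex None. *)
Definition wv d (n : nat) (x : pt d) : option (pt d) := if inbox n x then Some x else None.
Definition wends d (n : nat) (e : edge d) : option (pt d) * option (pt d) :=
  (wv n (zends e).1, wv n (zends e).2).

Definition wired_spanning_tree d (n : nat) (T : {fset edge d}) : Prop :=
  (T `<=` boxedges d n)%fset /\
  acyclic (wends n) (fun e => e \in T) /\
  (forall x, x \in boxpts d n -> conn (wends n) (fun e => e \in T) (Some x) None).

Definition wsts d (n : nat) : {fset {fset edge d}} :=
  [fset T in fpowerset (boxedges d n) | `[< wired_spanning_tree n T >]].

Definition ust_cyl (R : realType) d (n : nat) (A B : {fset edge d}) : R :=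
  (#|` [fset T in wsts d n | (A `<=` T)%fset && (B `&` T == fset0)%fset] |%:R)
  / (#|` wsts d n |%:R).

(* p is the law of the wired uniform spanning forest of Z^d, given through its values
   p A B = P(A ⊆ F, B ∩ F = ∅) on cylinder events (A, B finite): it is the weak limit of the
   wired USTs on the exhaustion by boxes [-n,n]^d. *)
Definition is_WUSF (R : realType) d (p : {fset edge d} -> {fset edge d} -> R) : Prop :=
  forall A B : {fset edge d}, (fun n : nat => ust_cyl R n A B) @ \oo --> p A B.

From HB Require Import structures.
From mathcomp Require Import all_boot all_order all_algebra.
From mathcomp Require Import finmap.
From mathcomp Require Import all_classical all_reals all_analysis.
From mathcomp Require Import zify.
Import Order.TTheory GRing.Theory Num.Theory.
Import numFieldNormedType.Exports.
Local Open Scope ring_scope.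

(* Let e be an edge of H with an endpoint v that no edge of A or B meets.  In a
   wired spanning tree T of a box that avoids e, the path in T from v to the other
   end of e leaves v through an edge f, and T - f + e is again a wired spanning
   tree; it still contains A and avoids B, since f meets v.  As f is one of the
   2d - 1 other edges at v and T is recovered from T - f + e and f, at most 2d
   times as many trees contain A and avoid B as also contain e, and this bound
   passes to the weak limit.
   It remains to order H so that every edge has an endpoint met by no earlier
   edge.  Greedily take the edge of least code that has exactly one endpoint met
   or whose H-component is not met at all.  The chosen edges connect any two met
   vertices that H connects, so, H being a forest, an edge with one endpoint met
   keeps its other endpoint unmet until it is taken; and an edge eligible forever
   would be overtaken by infinitely many edges of smaller code.  Hence every edge
   of H is taken. *)

Set Implicit Arguments.
Unset Strict Implicit.
Unset Printing Implicit Defensive.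

Section Connectivity.
Variables (E V : Type) (ends : E -> V * V).
Implicit Types (S : E -> Prop) (e f g : E) (a u v w x y : V).

Definition joins e u v := ends e = (u, v) \/ ends e = (v, u).
Definition incident e v := (ends e).1 = v \/ (ends e).2 = v.

Lemma joins_sym e u v : joins e u v -> joins e v u.
Proof. by case=> ?; [right|left]. Qed.

Lemma joins_ends e : joins e (ends e).1 (ends e).2.
Proof. by left; case: (ends e). Qed.

Lemma joins_incident e u v : joins e u v -> incident e u.
Proof. by rewrite /incident; case=> ->; [left|right]. Qed.

Lemma conn_trans S u v w : conn ends S u v -> conn ends S v w -> conn ends S u w.
Proof. by elim=> // {}u {}v w' e Se Je _ IH /IH; apply: conn_step Se Je. Qed.

Lemma conn_edge S e u v : S e -> joins e u v -> conn ends S u v.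
Proof. by move=> Se Je; apply: conn_step Se Je (conn_refl _ _ _). Qed.

Lemma conn_sym S u v : conn ends S u v -> conn ends S v u.
Proof.
elim=> [|{}u {}v w e Se Je _ IH]; first exact: conn_refl.
exact: conn_trans IH (conn_edge Se (joins_sym Je)).
Qed.

Lemma conn_sub S S' u v :
  conn ends S u v -> (forall e, S e -> S' e) -> conn ends S' u v.
Proof.
move=> C SS'; elim: C => [|{}u {}v w e Se Je _ IH]; first exact: conn_refl.
exact: conn_step (SS' _ Se) Je IH.
Qed.

Lemma conn_adjoin S e u v : conn ends (fun g => S g \/ g = e) u v ->
  [\/ conn ends S u v,
      conn ends S u (ends e).1 /\ conn ends S (ends e).2 v |
      conn ends S u (ends e).2 /\ conn ends S (ends e).1 v].
Proof.
elim=> [?|{}u {}v w g [Sg|->] Jg _ IH]; first by apply: Or31; exact: conn_refl.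
  have Cuv := conn_edge Sg Jg.
  case: IH => [Cvw|[C1 C2]|[C1 C2]].
  - by apply: Or31; exact: conn_trans Cuv Cvw.
  - by apply: Or32; split=> //; exact: conn_trans Cuv C1.
  - by apply: Or33; split=> //; exact: conn_trans Cuv C1.
move: IH; case: Jg => -> /= [Cvw|[C1 C2]|[C1 C2]];
  by [apply: Or31 | apply: Or32; split=> //; exact: conn_refl
     | apply: Or33; split=> //; exact: conn_refl].
Qed.

Lemma acyclic_sub S S' :
  acyclic ends S -> (forall g, S' g -> S g) -> acyclic ends S'.
Proof.
move=> acS S'S g S'g C; apply: (acS g (S'S _ S'g)).
by apply: (conn_sub C) => f [S'f fg]; split=> //; apply: S'S.
Qed.

Lemma acyclic_adjoin S e : acyclic ends S ->
  ~ conn ends S (ends e).1 (ends e).2 -> acyclic ends (fun g => S g \/ g = e).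
Proof.
move=> acS NC g Sg' C; have [ge|ge] := pselect (g = e).
  by subst g; apply: NC; apply: (conn_sub C) => f [[//|-> /(_ erefl)]].
have {Sg'} Sg : S g by case: Sg'.
have C' : conn ends (fun f => (S f /\ f <> g) \/ f = e) (ends g).1 (ends g).2.
  by apply: (conn_sub C) => f [[Sf|->] fg]; [left|right].
have sub f : S f /\ f <> g -> S f by case.
case: (conn_adjoin C') => [|[C1 C2]|[C1 C2]]; first exact: acS.
- apply: NC; apply: (conn_trans (conn_sym (conn_sub C1 sub))).
  exact: conn_step Sg (joins_ends g) (conn_sym (conn_sub C2 sub)).
- apply: NC; apply: (conn_trans (conn_sub C2 sub)).
  exact: conn_step Sg (joins_sym (joins_ends g)) (conn_sub C1 sub).
Qed.

Lemma conn_avoid_from S a u v :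
  conn ends (fun g => S g /\ ~ incident g a) u v -> u = a -> u = v.
Proof.
case=> // {}u {}v w e [_ ea] Je _ ua; case: ea; rewrite -ua.
exact: joins_incident Je.
Qed.

Lemma conn_last_exit S a u v : conn ends S u v -> v <> a ->
  conn ends (fun g => S g /\ ~ incident g a) u v \/
  exists f x, [/\ S f, joins f a x & conn ends (fun g => S g /\ ~ incident g a) x v].
Proof.
elim=> [?|{}u {}v w e Se Je _ IH] wa; first by left; exact: conn_refl.
case: (IH wa) => [C|]; last by right.
have [va|va] := pselect (v = a).
  by case: wa; rewrite -(conn_avoid_from C va).
have [ea|ea] := pselect (incident e a); last by left; exact: conn_step (conj Se ea) Je C.
have ua : u = a by case: Je ea; rewrite /incident => -> [] //= ?; subst v.
by right; exists e, v; split=> //; rewrite -ua.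
Qed.

Lemma acyclic_exchange S e a w : acyclic ends S -> ~ S e -> joins e a w -> a <> w ->
  conn ends S a w ->
  exists f, [/\ S f, incident f a, f <> e,
    acyclic ends (fun g => (S g /\ g <> f) \/ g = e) &
    forall x y, conn ends S x y -> conn ends (fun g => (S g /\ g <> f) \/ g = e) x y].
Proof.
move=> acS NSe Je aw Caw.
have [Cav|[f [x [Sf Jf Cxw]]]] := conn_last_exit Caw (nesym aw).
  by case: aw; exact: conn_avoid_from Cav erefl.
pose S' g := S g /\ g <> f.
(* f is the last edge at a on the path from a to w, so S' disconnects a from w. *)
have Cxw' : conn ends S' x w.
  apply: (conn_sub Cxw) => g [Sg ga]; split=> // gf.
  by apply: ga; rewrite gf; exact: joins_incident Jf.
have NCaw : ~ conn ends S' a w.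
  move=> Caw'; have Cax := conn_trans Caw' (conn_sym Cxw').
  by apply: (acS f Sf); case: Jf => ->; last apply: conn_sym.
have fe : f <> e by move=> fe; apply: NSe; rewrite -fe.
exists f; split=> //; first exact: joins_incident Jf.
  apply: (@acyclic_adjoin S'); first by apply: (acyclic_sub acS) => g [].
  by case: Je => ->; last move/conn_sym.
move=> y z; elim=> [?|p q r g Sg Jg _ IH]; first exact: conn_refl.
apply: conn_trans IH; have [gf|gf] := pselect (g = f); last by apply: conn_edge Jg; left.
have Cax : conn ends (fun g => S' g \/ g = e) a x.
  by apply: conn_step (or_intror erefl) Je _; apply: (conn_sub (conn_sym Cxw')); left.
by subst g; case: Jf Jg; rewrite /joins => -> [] [<- <-]; by [|apply: conn_sym].
Qed.

End Connectivity.

Section WiredBoxes.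
Local Open Scope fset_scope.
Variable d : nat.
Implicit Types (x v : pt d) (e f g : edge d) (T : {fset edge d}).

Lemma shiftpK x i : unshiftp (shiftp x i) i = x.
Proof. by apply/ffunP => j; rewrite !ffunE addrK. Qed.

Lemma unshiftpK x i : shiftp (unshiftp x i) i = x.
Proof. by apply/ffunP => j; rewrite !ffunE subrK. Qed.

Lemma shiftp_neq x i : shiftp x i <> x.
Proof. by move/ffunP/(_ i); rewrite ffunE eqxx /=; lia. Qed.

Definition edges_at v : seq (edge d) :=
  [seq (v, i) | i <- enum 'I_d] ++ [seq (unshiftp v i, i) | i <- enum 'I_d].

Lemma size_edges_at v : size (edges_at v) = (2 * d)%N.
Proof. by rewrite size_cat !size_map -enumT size_enum_ord mul2n addnn. Qed.

Lemma edges_atP v e : reflect (incident (@zends d) e v) (e \in edges_at v).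
Proof.
apply: (iffP idP); case: e => x i.
  rewrite mem_cat => /orP[] /mapP[j _ [-> ->]]; first by left.
  by right; rewrite /= unshiftpK.
rewrite mem_cat /incident /= => -[->|<-]; apply/orP; [left|right];
  by apply/mapP; exists i; rewrite ?mem_enum ?shiftpK.
Qed.

Lemma inbox_boxpts n x : inbox n x -> x \in boxpts d n.
Proof.
move=> /forallP xn; rewrite /boxpts inE.
have lt_i i : (absz (x i + n%:Z)%R < n.*2.+1)%N by have := xn i; lia.
apply/mapP; exists [ffun i => Ordinal (lt_i i)]; first by rewrite mem_enum.
by apply/ffunP => i; rewrite !ffunE /=; have := xn i; lia.
Qed.

Lemma wv_inbox n x : inbox n x -> wv n x = Some x.
Proof. by rewrite /wv => ->. Qed.

Lemma wv_Some n x y : wv n x = Some y -> x = y /\ inbox n x.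
Proof. by rewrite /wv; case: ifP => // xn [<-]. Qed.

Lemma boxedges_incident n v e : inbox n v -> incident (@zends d) e v -> e \in boxedges d n.
Proof.
move=> /inbox_boxpts vn; rewrite /boxedges inE /=.
case: e => x i; rewrite /incident /= => -[->|ev]; apply/orP; [left|right]; rewrite inE /=.
  by apply/allpairsP; exists (v, i); rewrite /= mem_enum.
by apply/allpairsP; exists (v, i); rewrite /= mem_enum -ev shiftpK ev.
Qed.

Lemma in_wsts n T : T \in wsts d n <-> wired_spanning_tree n T.
Proof.
rewrite /wsts !inE /=; split; first by case/andP => _ /asboolP.
move=> wst; apply/andP; split; last exact/asboolP.
by rewrite fpowersetE; case: wst.
Qed.

Lemma wired_conn_None n T x : wired_spanning_tree n T ->
  conn (wends n) (fun g => g \in T) (wv n x) None.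
Proof.
move=> [_ [_ connT]]; rewrite /wv; case: ifP => xn; last exact: conn_refl.
exact/connT/inbox_boxpts.
Qed.

Lemma wst_exchange n v e T : inbox n v -> incident (@zends d) e v ->
  T \in wsts d n -> e \notin T ->
  exists f, [/\ f \in T, incident (@zends d) f v, f != e & e |` (T `\ f) \in wsts d n].
Proof.
move=> vn ev /in_wsts wstT eT; have [Tbox [acT connT]] := wstT.
have [x [Je vx]] : exists x, joins (wends n) e (Some v) (wv n x) /\ Some v <> wv n x.
  case: e ev {eT} => y i; rewrite /incident /= => -[->|yv].
    exists (shiftp v i); split; first by left; rewrite /wends /= (wv_inbox vn).
    by move=> /esym /wv_Some [/shiftp_neq].
  exists y; split; first by right; rewrite /wends /= yv (wv_inbox vn).
  by move=> /esym /wv_Some [yv' _]; apply: (@shiftp_neq y i); rewrite yv yv'.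
have Cvx : conn (wends n) (fun g => g \in T) (Some v) (wv n x).
  exact: conn_trans (connT v (inbox_boxpts vn)) (conn_sym (wired_conn_None x wstT)).
have [f [fT fv fe acT' connT']] := acyclic_exchange acT (negP eT) Je vx Cvx.
exists f; split=> //; [|exact/eqP|apply/in_wsts; split; [|split]].
- by move: fv; rewrite /incident /wends /= => -[] /wv_Some [? _]; [left|right].
- apply/fsubsetP => g; rewrite in_fset1U in_fsetD1 => /orP[/eqP ->|/andP[_ gT]].
    exact: boxedges_incident ev.
  exact: (fsubsetP Tbox).
- apply: (acyclic_sub acT') => g; rewrite in_fset1U in_fsetD1.
  by case/orP => [/eqP|/andP[/eqP]]; [right|left].
- move=> y yn; apply: (conn_sub (connT' _ _ (connT y yn))) => g [[gT gf]|->].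
    by rewrite in_fset1U in_fsetD1 gT andbT; apply/orP; right; apply/eqP.
  exact: fset1U1.
Qed.

End WiredBoxes.

Section Cylinders.
Local Open Scope fset_scope.
Variable K : choiceType.
Implicit Types (A B : {fset K}) (W : {fset {fset K}}).

Lemma cardfs_le_cover (U : choiceType) (I : eqType) (X Y : {fset U}) (fs : seq I)
    (h : I -> U -> U) :
  (forall x, x \in X -> exists2 f, f \in fs & x \in [fset h f y | y in Y]) ->
  (#|` X| <= size fs * #|` Y|)%N.
Proof.
elim: fs X => [|f fs IH] X cover.
  rewrite mul0n leqn0 cardfs_eq0; apply/eqP/fsetP => x; rewrite in_fset0.
  by apply/negP => /cover [].
set Xf := [fset h f y | y in Y].
have XXf : X `<=` Xf `|` (X `\` Xf) by rewrite -fsubDset.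
rewrite mulSn; apply: leq_trans (fsubset_leq_card XXf) _.
apply: leq_trans (leq_card_fsetU _ _).1 (leq_add (leq_imfset_card _ _ _) (IH _ _)).
move=> x; rewrite in_fsetD => /andP[xXf /cover [g]].
by rewrite inE => /orP[/eqP ->|gfs]; [rewrite (negPf xXf)|exists g].
Qed.

Definition cylinder W A B := [fset T in W | (A `<=` T) && (B `&` T == fset0)].

Lemma in_cylinder W A B T :
  (T \in cylinder W A B) = [&& T \in W, A `<=` T & B `&` T == fset0].
Proof. by rewrite inE. Qed.

Lemma card_cylinder_exchange W (fs : seq K) e A B :
  e \in fs -> e \notin B -> {in fs, forall f, f \notin A} ->
  (forall T, T \in W -> e \notin T ->
     exists f, [/\ f \in fs, f \in T, f != e & e |` (T `\ f) \in W]) ->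
  (#|` cylinder W A B| <= size fs * #|` cylinder W (e |` A) B|)%N.
Proof.
move=> efs eB fsA exchange.
set C := cylinder W A B; set Ce := cylinder W (e |` A) B.
set C0 := [fset T in C | e \notin T].
have CCe : C `<=` Ce `|` C0.
  apply/fsubsetP => T TC; rewrite in_fsetU; have [eT|eT] := boolP (e \in T).
    move: TC; rewrite !in_cylinder => /and3P[-> AT ->].
    by rewrite fsubUset fsub1set eT AT.
  by apply/orP; right; rewrite /C0 !inE -in_cylinder TC.
have C0Ce : (#|` C0| <= (size fs).-1 * #|` Ce|)%N.
  rewrite -(size_rem efs); apply: (cardfs_le_cover (h := fun f T => f |` (T `\ e))).
  move=> T; rewrite /C0 !inE => /andP[/and3P[TW AT BT] eT].
  have [f [ffs fT fe T'W]] := exchange T TW eT.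
  exists f; first by rewrite (perm_mem (perm_to_rem efs)) inE (negPf fe) in ffs.
  apply/imfsetP; exists (e |` (T `\ f)) => /=.
    rewrite in_cylinder T'W fsetUS ?fsubsetD1 ?AT ?fsA //=.
    apply/eqP/fsetP => g; rewrite !inE; apply/negbTE/andP => -[gB /orP[/eqP ge|/andP[_ gT]]].
      by rewrite -ge gB in eB.
    by move/eqP/fsetP: BT => /(_ g); rewrite !inE gB gT.
  apply/fsetP => g; rewrite !inE.
  by have [->|gf] := eqVneq g f; [rewrite fT|have [->|] := eqVneq g e; [rewrite (negPf eT)|]].
have fs_gt0 : (0 < size fs)%N by case: (fs) efs.
apply: leq_trans (fsubset_leq_card CCe) _; apply: leq_trans (leq_card_fsetU _ _).1 _.
by rewrite -(prednK fs_gt0) mulSn leq_add2l.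
Qed.

End Cylinders.

Lemma ust_cylE (R : realType) d n (A B : {fset edge d}) :
  ust_cyl R n A B = #|` cylinder (wsts d n) A B|%:R / #|` wsts d n|%:R.
Proof. by []. Qed.

Lemma ust_cyl_step (R : realType) d n v e (A B : {fset edge d}) :
  inbox n v -> incident (@zends d) e v ->
  (forall g, g \in (A `|` B)%fset -> ~ incident (@zends d) g v) ->
  (2 * d)%:R^-1 * ust_cyl R n A B <= ust_cyl R n (e |` A)%fset B.
Proof.
move=> vn ev ABv.
have d_gt0 : (0 < d)%N by have := ltn_ord e.2; lia.
have : (#|` cylinder (wsts d n) A B|
        <= 2 * d * #|` cylinder (wsts d n) (e |` A)%fset B|)%N.
  rewrite -(size_edges_at v); apply: card_cylinder_exchange.
  - exact/edges_atP.
  - by apply/negP => eB; apply: (ABv e) => //; rewrite in_fsetU eB orbT.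
  - by move=> f /edges_atP fv; apply/negP => fA; apply: (ABv f) => //; rewrite in_fsetU fA.
  - move=> T TW eT; have [f [fT fv fe T'W]] := wst_exchange vn ev TW eT.
    by exists f; split=> //; apply/edges_atP.
rewrite !ust_cylE mulrA => le_card; apply: ler_wpM2r; first by rewrite invr_ge0 ler0n.
by rewrite ler_pdivrMl ?ltr0n ?muln_gt0 // -natrM ler_nat.
Qed.

Lemma inbox_near d (v : pt d) : (\forall n \near \oo, inbox n v)%classic.
Proof.
exists (\max_(i < d) `|v i|%N)%N => // n /= vn; apply/forallP => i.
rewrite -abszE lez_nat (leq_trans _ vn) //.
exact: (@leq_bigmax _ (fun i => `|v i|%N) i).
Qed.

Lemma wusf_step (R : realType) d (p : {fset edge d} -> {fset edge d} -> R) v e A B :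
  is_WUSF p -> incident (@zends d) e v ->
  (forall g, g \in (A `|` B)%fset -> ~ incident (@zends d) g v) ->
  (2 * d)%:R^-1 * p A B <= p (e |` A)%fset B.
Proof.
move=> wusf ev ABv.
apply: (ler_cvg_to (cvgMl_tmp (a := (2 * d)%:R^-1) (wusf A B)) (wusf _ _)).
near=> n; apply: ust_cyl_step ev ABv; near: n; exact: inbox_near.
Unshelve. all: end_near.
Qed.

Section GreedyEnumeration.
Variables (d : nat) (H : edge d -> Prop).
Implicit Types (L : seq (edge d)) (g h : edge d) (x y : pt d).

Definition touched L x := exists2 g, g \in L & incident (@zends d) g x.

Definition one_end_touched L h :=
  touched L (zends h).1 /\ ~ touched L (zends h).2 \/
  ~ touched L (zends h).1 /\ touched L (zends h).2.

Definition untouched_component L h :=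
  forall x, conn (@zends d) H (zends h).1 x -> ~ touched L x.

Definition eligible L h := H h /\ (one_end_touched L h \/ untouched_component L h).

Lemma eligible_notin L h : eligible L h -> h \notin L.
Proof.
move=> [_ [[[_ t2]|[t1 _]]|fresh]]; apply/negP => hL.
- by apply: t2; exists h => //; right.
- by apply: t1; exists h => //; left.
- by apply: (fresh _ (conn_refl _ _ _)); exists h => //; left.
Qed.

Lemma eligible_untouched_end L h : eligible L h ->
  exists2 v, incident (@zends d) h v & ~ touched L v.
Proof.
move=> [_ [[[_ t2]|[t1 _]]|fresh]].
- by exists (zends h).2 => //; right.
- by exists (zends h).1 => //; left.
- by exists (zends h).1; [left|apply: fresh; exact: conn_refl].
Qed.

Lemma touched_rcons L h x :
  touched (rcons L h) x <-> touched L x \/ incident (@zends d) h x.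
Proof.
split=> [[g]|[[g gL gx]|hx]].
- by rewrite mem_rcons in_cons => /orP[/eqP ->|gL] gx; [right|left; exists g].
- by exists g => //; rewrite mem_rcons in_cons gL orbT.
- by exists h => //; rewrite mem_rcons in_cons eqxx.
Qed.

Definition conn_faithful L := forall x y, touched L x -> touched L y ->
  conn (@zends d) H x y -> conn (@zends d) (fun g => g \in L) x y.

Lemma conn_faithful_rcons L h :
  conn_faithful L -> eligible L h -> conn_faithful (rcons L h).
Proof.
move=> faithL [Hh elig].
pose C' := conn (@zends d) (fun g => g \in rcons L h).
have LC' x y : conn (@zends d) (fun g => g \in L) x y -> C' x y.
  by move=> C; apply: (conn_sub C) => g gL; rewrite mem_rcons in_cons gL orbT.
have ends_conn S x y : S h -> incident (@zends d) h x -> incident (@zends d) h y ->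
    conn (@zends d) S x y.
  move=> Sh hx hy; have := conn_edge Sh (joins_ends (@zends d) h).
  by case: hx hy => <- [] <- C; by [exact: conn_refl|exact: conn_sym C|].
have hC' x y : incident (@zends d) h x -> incident (@zends d) h y -> C' x y.
  by apply: ends_conn; rewrite mem_rcons in_cons eqxx.
have new_old x y : incident (@zends d) h x -> touched L y ->
    conn (@zends d) H x y -> C' x y.
  move=> hx ty Cxy; case: elig => [one|fresh].
    have [t ht tt] : exists2 t, incident (@zends d) h t & touched L t.
      case: one => [[t1 _]|[_ t2]]; first by exists (zends h).1 => //; left.
      by exists (zends h).2 => //; right.
    apply: conn_trans (hC' _ _ hx ht) (LC' _ _ (faithL _ _ tt ty _)).
    exact: conn_trans (ends_conn _ _ _ Hh ht hx) Cxy.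
  case: (fresh y) => //; apply: conn_trans (ends_conn _ _ _ Hh _ hx) Cxy; by left.
move=> x y /touched_rcons[tx|hx] /touched_rcons[ty|hy] Cxy.
- exact/LC'/faithL.
- exact/conn_sym/new_old/conn_sym.
- exact: new_old.
- exact: hC'.
Qed.

Definition eligible_code L n : bool :=
  `[< exists2 h, choice.pickle h = n & eligible L h >].

Definition next L : option (edge d) :=
  if pselect (exists n, eligible_code L n) is left ex
  then pickle_inv (ex_minn ex) else None.

Lemma next_Some L h : next L = Some h ->
  eligible L h /\ forall h', eligible L h' -> (choice.pickle h <= choice.pickle h')%N.
Proof.
rewrite /next; case: pselect => // ex; case: ex_minnP => m /asboolP[h0 <- elig0] min0.
rewrite pickleK_inv => -[<-]; split=> // h' elig'.
by apply: min0; apply/asboolP; exists h'.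
Qed.

Lemma next_None L : next L = None -> forall h, ~ eligible L h.
Proof.
rewrite /next; case: pselect => [ex|nex _ h elig].
  by case: ex_minnP => m /asboolP[h0 <- _] _; rewrite pickleK_inv.
by apply: nex; exists (choice.pickle h); apply/asboolP; exists h.
Qed.

Definition grow L := if next L is Some h then rcons L h else L.

Definition stage k := iter k grow [::].

Lemma stageS k : stage k.+1 = grow (stage k).
Proof. by []. Qed.

Lemma stage_ind (P : seq (edge d) -> Prop) :
  P [::] -> (forall L h, P L -> eligible L h -> P (rcons L h)) -> forall k, P (stage k).
Proof.
move=> P0 Prcons; elim=> // k IH; rewrite stageS /grow.
by case En: next => [h|//]; apply: Prcons IH (next_Some En).1.
Qed.

Lemma stage_H k g : g \in stage k -> H g.
Proof.
move: g; apply: (stage_ind (P := fun L => forall g, g \in L -> H g)) => // L h IH [Hh _] g.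
by rewrite mem_rcons in_cons => /orP[/eqP ->|/IH].
Qed.

Lemma stage_uniq k : uniq (stage k).
Proof.
apply: (stage_ind (P := fun L => uniq L)) => // L h uL elig.
by rewrite rcons_uniq eligible_notin.
Qed.

Lemma stage_conn_faithful k : conn_faithful (stage k).
Proof.
by apply: (stage_ind (P := conn_faithful)) => [x y []|]; last exact: conn_faithful_rcons.
Qed.

Lemma stage_cat j m : exists t, stage (j + m) = stage j ++ t.
Proof.
elim: m => [|m [t IH]]; first by exists [::]; rewrite addn0 cats0.
rewrite addnS stageS /grow IH; case: next => [h|]; last by exists t.
by exists (rcons t h); rewrite rcons_cat.
Qed.

Lemma touched_stage_le j k x : (j <= k)%N -> touched (stage j) x -> touched (stage k) x.
Proof.
move=> /subnKC <- [g gj gx]; have [t ->] := stage_cat j (k - j).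
by exists g => //; rewrite mem_cat gj.
Qed.

Lemma not_always_eligible k h : ~ (forall j, (k <= j)%N -> eligible (stage j) h).
Proof.
move=> elig.
(* From step k on, every step adds a new edge of code at most that of h. *)
have grown m : exists t, [/\ stage (k + m) = stage k ++ t, size t = m &
    all (fun g => choice.pickle g <= choice.pickle h)%N t].
  elim: m => [|m [t [Et St At]]]; first by exists [::]; rewrite addn0 cats0.
  have eligm := elig _ (leq_addr m k).
  case En: (next (stage (k + m))) => [g|]; last by case: (next_None En eligm).
  exists (rcons t g); rewrite addnS stageS /grow En Et rcons_cat size_rcons St.
  by rewrite all_rcons (next_Some En).2.
have [t [Et St At]] := grown (choice.pickle h).+2.
have := stage_uniq (k + (choice.pickle h).+2); rewrite Et cat_uniq => /and3P[_ _ ut].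
have codes : {subset map choice.pickle t <= iota 0 (choice.pickle h).+1}.
  by move=> c /mapP[g gt ->]; rewrite mem_iota ltnS (allP At).
have := uniq_leq_size _ codes; rewrite map_inj_uniq; last exact: pcan_inj pickleK_inv.
by rewrite size_map size_iota St => /(_ ut); lia.
Qed.

Hypothesis H_acyclic : acyclic (@zends d) H.

Lemma stage_ends_not_both_touched k h : H h -> h \notin stage k ->
  touched (stage k) (zends h).1 -> ~ touched (stage k) (zends h).2.
Proof.
move=> Hh hk t1 t2.
have := stage_conn_faithful t1 t2 (conn_edge Hh (joins_ends (@zends d) h)).
move=> C; apply: (H_acyclic Hh); apply: (conn_sub C) => g gk; split; first exact: stage_H gk.
by move=> gh; rewrite -gh gk in hk.
Qed.

Lemma enumerated_of_touched_end k h : H h ->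
  touched (stage k) (zends h).1 \/ touched (stage k) (zends h).2 ->
  exists j, h \in stage j.
Proof.
move=> Hh tk; apply: contrapT => never.
apply: (@not_always_eligible k h) => j kj.
have hj : h \notin stage j by apply/negP => hj; apply: never; exists j.
have both := stage_ends_not_both_touched Hh hj.
split=> //; left; case: tk => /(touched_stage_le kj) t; [left|right]; split=> // t'.
  exact: both t t'.
exact: both t' t.
Qed.

Lemma component_touched h : H h ->
  exists k x, conn (@zends d) H (zends h).1 x /\ touched (stage k) x.
Proof.
move=> Hh; apply: contrapT => never; apply: (@not_always_eligible 0 h) => j _.
by split=> //; right => x hx tx; apply: never; exists j, x.
Qed.

Lemma touched_along k x y : conn (@zends d) H x y -> touched (stage k) y ->
  exists j, touched (stage j) x.
Proof.
move=> C; elim: C k => [?|u v w g Hg Jg _ IH] k tw; first by exists k.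
have [j tv] := IH k tw.
have [j' gj'] : exists j, g \in stage j.
  apply: (enumerated_of_touched_end (k := j)) => //.
  by move: tv; case: (joins_incident (joins_sym Jg)) => <- tv; [left|right].
by exists j', g => //; exact: joins_incident Jg.
Qed.

Lemma stage_exhaustive h : H h -> exists j, h \in stage j.
Proof.
move=> Hh; have [k [x [Cx tx]]] := component_touched Hh.
have [j tj] := touched_along Cx tx.
by apply: (enumerated_of_touched_end (k := j)) => //; left.
Qed.

Variable e0 : edge d.

Definition greedy_seq k := odflt e0 (next (stage k)).

Definition greedy_stop : option nat :=
  if pselect (exists k, next (stage k) == None) is left ex
  then Some (ex_minn ex) else None.

Definition in_greedy_dom k := if greedy_stop is Some m then (k < m)%N else true.

Lemma stage_stuck m t : next (stage m) = None -> stage (m + t) = stage m.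
Proof.
move=> stuck; elim: t => [|t IH]; first by rewrite addn0.
by rewrite addnS stageS /grow IH stuck.
Qed.

Lemma in_greedy_domP k : in_greedy_dom k <-> next (stage k) <> None.
Proof.
rewrite /in_greedy_dom /greedy_stop; case: pselect => [ex|nex]; last first.
  by split=> // _ stuck; apply: nex; exists k; rewrite stuck.
case: ex_minnP => m /eqP stuck min_m; split=> [km stuck'|live].
  by have := min_m k (introT eqP stuck'); lia.
by rewrite ltnNge; apply/negP => mk; apply: live; rewrite -(subnKC mk) stage_stuck.
Qed.

Lemma next_stage k : in_greedy_dom k -> next (stage k) = Some (greedy_seq k).
Proof. by move/in_greedy_domP; rewrite /greedy_seq; case: next. Qed.

Lemma in_greedy_dom_le j k : (j <= k)%N -> in_greedy_dom k -> in_greedy_dom j.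
Proof. by rewrite /in_greedy_dom; case: greedy_stop => // m; lia. Qed.

Lemma stage_greedy_seq k :
  in_greedy_dom k -> stage k = [seq greedy_seq i | i <- iota 0 k].
Proof.
elim: k => // k IH Dk; have Dk' := in_greedy_dom_le (leqnSn k) Dk.
by rewrite stageS /grow next_stage // IH // -addn1 iotaD map_cat cats1.
Qed.

Lemma greedy_seq_notin k : in_greedy_dom k -> greedy_seq k \notin stage k.
Proof. by move/next_stage/next_Some => [/eligible_notin]. Qed.

Lemma greedy_seq_in i k : in_greedy_dom k -> (i < k)%N -> greedy_seq i \in stage k.
Proof. by move=> Dk ik; rewrite stage_greedy_seq // map_f // mem_iota. Qed.

Lemma greedy_seq_inj k l : in_greedy_dom k -> in_greedy_dom l ->
  greedy_seq k = greedy_seq l -> k = l.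
Proof.
move=> Dk Dl skl; apply/eqP; rewrite eqn_leq; apply/andP; split;
  rewrite leqNgt; apply/negP => lt.
- by have := greedy_seq_notin Dk; rewrite skl greedy_seq_in.
- by have := greedy_seq_notin Dl; rewrite -skl greedy_seq_in.
Qed.

Lemma mem_stage j g : g \in stage j -> exists k, in_greedy_dom k /\ greedy_seq k = g.
Proof.
elim: j => [//|j IH]; rewrite stageS /grow.
case En: (next (stage j)) => [h|]; last exact: IH.
rewrite mem_rcons in_cons => /orP[/eqP ->|/IH //]; exists j.
by split; [apply/in_greedy_domP; rewrite En|rewrite /greedy_seq En].
Qed.

Lemma greedy_seq_onto g : H g <-> exists k, in_greedy_dom k /\ greedy_seq k = g.
Proof.
split=> [/stage_exhaustive [j /mem_stage] //|[k [Dk <-]]].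
exact: (next_Some (next_stage Dk)).1.1.
Qed.

Lemma greedy_seq_fresh_end n : in_greedy_dom n ->
  exists v, incident (@zends d) (greedy_seq n) v /\
    forall g, g \in [fset greedy_seq k | k in iota 0 n]%fset ->
      ~ incident (@zends d) g v.
Proof.
move=> Dn; have [v sv untouched] := eligible_untouched_end (next_Some (next_stage Dn)).1.
exists v; split=> // _ /imfsetP[k /= kn ->] kv; apply: untouched.
by exists (greedy_seq k) => //; rewrite stage_greedy_seq // map_f.
Qed.

End GreedyEnumeration.

Unset Implicit Arguments.
Set Strict Implicit.

Theorem claim2p1 (R : realType) (d : nat)
    (p : {fset edge d} -> {fset edge d} -> R) (H : edge d -> Prop) :
  (1 <= d)%N ->
  is_WUSF p ->
  acyclic (@zends d) H ->
  exists (s : nat -> edge d) (N : option nat),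
    let dom := fun k : nat => if N is Some m then (k < m)%N else true in
    (forall k l, dom k -> dom l -> s k = s l -> k = l) /\
    (forall e, H e <-> exists k, dom k /\ s k = e) /\
    (forall n, dom n -> forall A B : {fset edge d},
        (A `|` B)%fset = [fset s k | k in iota 0 n]%fset ->
        (A `&` B)%fset = fset0 ->
        (2 * d)%:R^-1 * p A B <= p (s n |` A)%fset B).
Proof.
move=> d_gt0 wusf acH.
pose e0 : edge d := ([ffun => 0], Ordinal d_gt0).
exists (greedy_seq H e0), (greedy_stop H) => dom.
split; [exact: greedy_seq_inj|split; [exact: greedy_seq_onto|]].
move=> n Dn A B AB _; have [v [sv fresh]] := greedy_seq_fresh_end e0 Dn.
by apply: (wusf_step wusf sv) => g; rewrite AB; apply: fresh.
Qed.
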